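(* Let $\ell$ be a prime and let $R,S,T$ be pairwise coprime positive integers. Let $S'=\prod_{q:\ \operatorname{ord}_q(S)\text{ odd}} q$, let $v$ be the positive integer with $SS'=v^2$, let $u=RS'$, and write $TS'=mn^2$ with $m$ a squarefree positive integer and $n$ a positive integer. Let $K=\mathbb{Q}(\sqrt{-m})$, let $\epsilon\in K^*$ be a representative of an element of $\mathcal{E}$, and let $\mathfrak{q}$ be a prime ideal of the ring of integers of $K$. Suppose one of the following holds: (i) $\operatorname{ord}_{\mathfrak q}(v)$, $\operatorname{ord}_{\mathfrak q}(n\sqrt{-m})$, $\operatorname{ord}_{\mathfrak q}(\epsilon)$ are pairwise distinct modulo $\ell$; (ii) $\operatorname{ord}_{\mathfrak q}(2v)$, $\operatorname{ord}_{\mathfrak q}(\epsilon)$, $\operatorname{ord}_{\mathfrak q}(\overline{\epsilon})$ are pairwise distinct modulo $\ell$; (iii) $\operatorname{ord}_{\mathfrak q}(2n\sqrt{-m})$, $\operatorname{ord}_{\mathfrak q}(\epsilon)$, $\operatorname{ord}_{\mathfrak q}(\overline{\epsilon})$ are pairwise distinct modulo $\ell$. Then there are no $\sigma\in\mathbb{Z}$ and $\eta\in K$ satisfying \[ v\sigma^\ell+n\sqrt{-m}=\epsilon\eta^\ell . \]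
   Context: $\mathcal{O}$ denotes the ring of integers of $K$ and $\overline{\cdot}$ complex conjugation. Let $\mathfrak{S}$ be the set of prime ideals of $\mathcal{O}$ dividing $u$ or $2n\sqrt{-m}$. The $\ell$-Selmer group is $K(\mathfrak{S},\ell)=\{\epsilon\in K^*/K^{*\ell}:\operatorname{ord}_{\mathfrak P}(\epsilon)\equiv 0\pmod\ell \text{ for all prime ideals }\mathfrak P\notin\mathfrak{S}\}$, and $\mathcal{E}=\{\epsilon\in K(\mathfrak{S},\ell): \operatorname{Norm}(\epsilon)/u\in\mathbb{Q}^{*\ell}\}$. *)

(* K = Q(sqrt(-m)) is realised inside algC. *)
From Stdlib Require Import ClassicalEpsilon.
From mathcomp Require Import all_boot all_order all_algebra all_field.
Set Implicit Arguments. Unset Strict Implicit. Unset Printing Implicit Defensive.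
Import Order.TTheory GRing.Theory Num.Theory.
Local Open Scope ring_scope.

Definition sqrtm (m : nat) : algC := sqrtC (- (m%:R)).

Definition inK (m : nat) (x : algC) : Prop :=
  exists a b : rat, x = ratr a + ratr b * sqrtm m.

Definition inO (m : nat) (x : algC) : Prop := inK m x /\ x \in Aint.

Definition prime_ideal (m : nat) (P : algC -> Prop) : Prop :=
  (forall x, P x -> inO m x) /\
  P 0 /\
  (forall x y, P x -> P y -> P (x - y)) /\
  (forall a x, inO m a -> P x -> P (a * x)) /\
  ~ P 1 /\
  (exists x, P x /\ x != 0) /\
  (forall x y, inO m x -> inO m y -> P (x * y) -> P x \/ P y).

(* membership in the ideal power P^k of O (P^0 = O) *)
Inductive ipow (m : nat) (P : algC -> Prop) : nat -> algC -> Prop :=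
  | ipow_O x : inO m x -> ipow m P 0 x
  | ipow_0 k : ipow m P k 0
  | ipow_add k x y : ipow m P k x -> ipow m P k y -> ipow m P k (x + y)
  | ipow_mul k a b : P a -> ipow m P k b -> ipow m P k.+1 (a * b).

Definition ordO_rel (m : nat) (P : algC -> Prop) (y : algC) (j : nat) : Prop :=
  ipow m P j y /\ ~ ipow m P j.+1 y.

(* ord_P(x) = k for nonzero x in K, via x = y / d with y in O, d a positive integer *)
Definition ord_rel (m : nat) (P : algC -> Prop) (x : algC) (k : int) : Prop :=
  [/\ inK m x, x != 0 &
      exists (d j1 j2 : nat), [/\ (0 < d)%N, inO m (d%:R * x),
        ordO_rel m P (d%:R * x) j1, ordO_rel m P d%:R j2 & k = j1%:Z - j2%:Z]].

Definition ord (m : nat) (P : algC -> Prop) (x : algC) : int :=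
  @epsilon int (inhabits 0) (ord_rel m P x).

Definition squarefree (m : nat) : Prop :=
  forall p, prime p -> ~~ (p ^ 2 %| m)%N.

Definition Sprime (S : nat) : nat :=
  (\prod_(q <- primes S | odd (logn q S)) q)%N.

(* epsilon (nonzero, in K) represents an element of the set E, for the data l, u, n, m.
   S-frak = primes of O dividing u or 2 n sqrt(-m). *)
Definition in_E (l u n m : nat) (eps : algC) : Prop :=
  [/\ inK m eps, eps != 0,
      (forall P, prime_ideal m P -> ~ P u%:R -> ~ P (2%:R * n%:R * sqrtm m) ->
         ((l%:Z) %| ord m P eps)%Z)
    & exists r : rat, r != 0 /\ (eps * eps^*) / u%:R = ratr r ^+ l].

Definition pw_distinct_mod (l : nat) (a b c : int) : Prop :=
  [/\ (a != b %[mod l%:Z])%Z, (a != c %[mod l%:Z])%Z & (b != c %[mod l%:Z])%Z].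

From mathcomp Require Import all_boot all_order all_algebra all_field.
From mathcomp Require Import ring zify.
From Stdlib Require Import Classical ClassicalEpsilon.
Import Order.TTheory GRing.Theory Num.Theory.
Set Implicit Arguments. Unset Strict Implicit. Unset Printing Implicit Defensive.
Local Open Scope ring_scope.

(* Every nonzero prime P of O contains a rational prime p, and either p itself or an element pi
   of norm exactly divisible by p generates P locally: s P lies in pi O for an integer s not in P.
   Dividing out pi, which strictly lowers the p-adic valuation of the norm, shows that ord_P is
   well defined, additive and ultrametric on K^*.  With A = eps eta^l and B its conjugate, the
   identities v sigma^l + n sqrt(-m) = A, A + B = 2 v sigma^l and A - B = 2 n sqrt(-m) each write
   zero as a sum of three terms c t^l, whose orders are congruent to ord c modulo l; two nonzero
   terms of a vanishing sum have the same order, so two of the three given orders agree mod l. *)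

Lemma Aint_trace_norm (z : algC) :
  z + z^* \in Num.int -> z * z^* \in Num.int -> z \in Aint.
Proof.
move=> trz nz; apply: (@root_monic_Aint (('X - z%:P) * ('X - (z^*)%:P))).
- by rewrite rootM root_XsubC eqxx.
- by rewrite monicMl ?monicXsubC.
have -> : ('X - z%:P) * ('X - (z^*)%:P) = 'X * 'X - (z + z^*)%:P * 'X + (z * z^*)%:P.
  by rewrite polyCD polyCM; ring.
(* Unfolding [Num.int] lets the closure lemmas find the [polyOver] instance. *)
have : 'X * 'X - (z + z^*)%:P * 'X + (z * z^*)%:P \is a polyOver Num.int_num_subdef.
  by rewrite rpredD ?rpredB ?rpredM ?polyOverX ?polyOverC.
by [].
Qed.

Lemma conj_natr n : (n%:R : algC)^* = n%:R.
Proof. exact: conj_Crat (rpred_nat _ _). Qed.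

(* Meaningful only on O, where [x * x^*] is a natural number. *)
Definition normO (x : algC) : nat := Num.truncn (x * x^*).

Section QuadraticField.

Variable m : nat.
Hypothesis m_gt0 : (0 < m)%N.
Local Notation w := (sqrtm m).

Lemma sqrtm_mul_self : w * w = - m%:R.
Proof. by rewrite -expr2 /sqrtm sqrtCK. Qed.

Lemma sqrtm_neq0 : w != 0.
Proof. by rewrite /sqrtm sqrtC_eq0 oppr_eq0 pnatr_eq0 -lt0n. Qed.

Lemma conj_sqrtm : w^* = - w.
Proof.
have ww : w^* * w^* = w * w by rewrite -rmorphM sqrtm_mul_self rmorphN rmorph_nat.
have : (w^* - w) * (w^* + w) = 0.
  by rewrite mulrDr !mulrBl ww [w * w^*]mulrC addrA subrK subrr.
move/eqP; rewrite mulf_eq0 subr_eq0 addr_eq0 => /orP[/eqP real_w|/eqP //].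
have := mul_conjC_ge0 w; rewrite real_w sqrtm_mul_self oppr_ge0 lern0 => /eqP m0.
by move: m_gt0; rewrite m0.
Qed.

Lemma conj_ratr_sqrtm (a b : rat) : (ratr a + ratr b * w)^* = ratr a - ratr b * w.
Proof.
by rewrite rmorphD /= (conj_Crat (Crat_rat a)) rmorphM /= (conj_Crat (Crat_rat b)) conj_sqrtm mulrN.
Qed.

Lemma inK_rat a : inK m (ratr a).
Proof. by exists a, 0; rewrite rmorph0 mul0r addr0. Qed.

Lemma inK_sqrtm : inK m w.
Proof. by exists 0, 1; rewrite rmorph0 rmorph1 mul1r add0r. Qed.

Lemma inK_nat n : inK m n%:R.
Proof. by rewrite -(ratr_nat algC); apply: inK_rat. Qed.

Lemma inK_int (n : int) : inK m n%:~R.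
Proof. by rewrite -(ratr_int algC); apply: inK_rat. Qed.

Lemma inK_natV n : inK m (n%:R)^-1.
Proof. by rewrite -(ratr_nat algC) -fmorphV; apply: inK_rat. Qed.

Lemma inK_add x y : inK m x -> inK m y -> inK m (x + y).
Proof.
by move=> [a [b ->]] [c [d ->]]; exists (a + c), (b + d); rewrite !rmorphD /=; ring.
Qed.

Lemma inK_opp x : inK m x -> inK m (- x).
Proof. by move=> [a [b ->]]; exists (- a), (- b); rewrite !rmorphN /=; ring. Qed.

Lemma inK_mul x y : inK m x -> inK m y -> inK m (x * y).
Proof.
move=> [a [b ->]] [c [d ->]]; exists (a * c - m%:R * b * d), (a * d + b * c).
rewrite !(rmorphD, rmorphN, rmorphB, rmorphM) /= ratr_nat.
apply/eqP; rewrite -subr_eq0; apply/eqP.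
have -> : forall A B C D M W : algC, (A + B * W) * (C + D * W)
    - (A * C - M * B * D + (A * D + B * C) * W) = (W * W + M) * (B * D) by move=> *; ring.
by rewrite sqrtm_mul_self addNr mul0r.
Qed.

Lemma inK_conj x : inK m x -> inK m x^*.
Proof. by move=> [a [b ->]]; exists a, (- b); rewrite conj_ratr_sqrtm rmorphN mulNr. Qed.

Lemma inK_exp x k : inK m x -> inK m (x ^+ k).
Proof.
move=> hx; elim: k => [|k IH]; first by rewrite expr0; apply: (inK_nat 1).
by rewrite exprS; apply: inK_mul.
Qed.

Lemma inK_trace_Crat x : inK m x -> x + x^* \in Crat.
Proof.
move=> [a [b ->]]; rewrite conj_ratr_sqrtm.
have -> : ratr a + ratr b * w + (ratr a - ratr b * w) = ratr a + ratr a by ring.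
by rewrite rpredD ?Crat_rat.
Qed.

Lemma inK_norm_Crat x : inK m x -> x * x^* \in Crat.
Proof.
move=> [a [b ->]]; rewrite conj_ratr_sqrtm.
have -> : (ratr a + ratr b * w) * (ratr a - ratr b * w)
    = ratr a * ratr a + ratr b * ratr b * - (w * w) by ring.
rewrite sqrtm_mul_self opprK.
by apply: rpredD; [apply: rpredM | apply: rpredM; [apply: rpredM |]];
  rewrite ?Crat_rat ?rpred_nat.
Qed.

Lemma Cint_ratr_mul_den (r : rat) (d e : nat) :
  denq r = d%:Z -> ((e * d)%:R * ratr r : algC) \in Num.int.
Proof.
move=> hd; have : (numq r)%:~R = ratr r * d%:R :> algC.
  by rewrite -(ratr_int algC) numqE hd rmorphM /= ratr_int.
by rewrite natrM -mulrA [d%:R * _]mulrC => <-; rewrite rpredM ?natr_int ?intr_int.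
Qed.

Lemma Aint_sqrtm : w \in Aint.
Proof.
apply: (@root_monic_Aint ('X^2 + (m%:R)%:P)).
- by rewrite rootE !hornerE /sqrtm sqrtCK addNr.
- exact: monicXnaddC.
- by rewrite polyOverXnaddC natr_int.
Qed.

Lemma inO_add x y : inO m x -> inO m y -> inO m (x + y).
Proof. by move=> [? ?] [? ?]; split; [apply: inK_add | apply: rpredD]. Qed.

Lemma inO_mul x y : inO m x -> inO m y -> inO m (x * y).
Proof. by move=> [? ?] [? ?]; split; [apply: inK_mul | apply: rpredM]. Qed.

Lemma inO_int (n : int) : inO m n%:~R.
Proof. by split; [apply: inK_int | apply: Aint_int]. Qed.

Lemma inO_nat n : inO m n%:R.
Proof. exact: (inO_int n). Qed.

Lemma inO_conj x : inO m x -> inO m x^*.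
Proof. by move=> [? ?]; split; [apply: inK_conj | rewrite (Aint_aut Num.conj)]. Qed.

Lemma inO_trace_int x : inO m x -> x + x^* \in Num.int.
Proof.
move=> [hK hA]; apply: Cint_rat_Aint; first exact: inK_trace_Crat.
by rewrite rpredD // (Aint_aut Num.conj).
Qed.

Lemma inO_norm_nat x : inO m x -> x * x^* \in Num.nat.
Proof.
move=> [hK hA]; rewrite natrEint mul_conjC_ge0 andbT.
by apply: Cint_rat_Aint; [exact: inK_norm_Crat | rewrite rpredM // (Aint_aut Num.conj)].
Qed.

Lemma normOE x : inO m x -> (normO x)%:R = x * x^*.
Proof. by move/inO_norm_nat/truncnK. Qed.

Lemma normO_gt0 x : inO m x -> x != 0 -> (0 < normO x)%N.
Proof. by move=> ox nx; rewrite -(ltr0n algC) normOE // mul_conjC_gt0. Qed.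

Lemma normOM x y : inO m x -> inO m y -> normO (x * y) = (normO x * normO y)%N.
Proof.
move=> ox oy; have oxy := inO_mul ox oy.
apply/eqP; rewrite -(eqr_nat algC) natrM !normOE // rmorphM /=; apply/eqP; ring.
Qed.

Lemma normO_nat n : normO n%:R = (n * n)%N.
Proof. by apply/eqP; rewrite -(eqr_nat algC) normOE ?conj_natr ?natrM //; apply: inO_nat. Qed.

Lemma inO_divn x (d : nat) : inO m x ->
  (x + x^*) / d%:R \in Num.int -> x * x^* / d%:R ^+ 2 \in Num.int -> inO m (x / d%:R).
Proof.
move=> [hK _] htr hnorm; split; first by apply: inK_mul hK (inK_natV d).
have conj_xd : (x / d%:R)^* = x^* / d%:R by rewrite rmorphM /= fmorphV /= conj_natr.
apply: Aint_trace_norm; rewrite conj_xd.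
  by rewrite -mulrDl.
by rewrite mulrACA -invfM -expr2.
Qed.

Lemma inK_den x : inK m x -> exists2 d : nat, (0 < d)%N & inO m (d%:R * x).
Proof.
move=> hx; have [a [b ex]] := hx; have [da hda] := denqP a; have [db hdb] := denqP b.
exists (da.+1 * db.+1)%N => //; split; first by apply: inK_mul => //; apply: inK_nat.
rewrite ex mulrDr; apply: rpredD.
  by apply: Aint_Cint; rewrite mulnC; apply: Cint_ratr_mul_den.
by rewrite mulrA rpredM ?Aint_sqrtm //; apply: Aint_Cint; apply: Cint_ratr_mul_den.
Qed.

Section PrimeIdeal.

Variable P : algC -> Prop.
Hypothesis hP : prime_ideal m P.

Lemma P_inO x : P x -> inO m x. Proof. by case: hP => h _; apply: h. Qed.
Lemma P_0 : P 0. Proof. by case: hP => _ []. Qed.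
Lemma P_sub x y : P x -> P y -> P (x - y). Proof. by case: hP => _ [_ []] h _; apply: h. Qed.
Lemma P_mull a x : inO m a -> P x -> P (a * x).
Proof. by case: hP => _ [_ [_ []]] h _; apply: h. Qed.
Lemma P_1 : ~ P 1. Proof. by case: hP => _ [_ [_ [_ []]]]. Qed.
Lemma P_nonzero : exists x, P x /\ x != 0. Proof. by case: hP => _ [_ [_ [_ [_ []]]]]. Qed.
Lemma P_prime x y : inO m x -> inO m y -> P (x * y) -> P x \/ P y.
Proof. by case: hP => _ [_ [_ [_ [_ [_ h]]]]]; apply: h. Qed.

Lemma P_opp x : P x -> P (- x).
Proof. by move=> Px; rewrite -sub0r; apply: P_sub Px; apply: P_0. Qed.

Lemma P_add x y : P x -> P y -> P (x + y).
Proof. by move=> Px Py; rewrite -[y]opprK; apply: P_sub Px (P_opp Py). Qed.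

Lemma P_mulr a x : inO m a -> P x -> P (x * a).
Proof. by rewrite mulrC; apply: P_mull. Qed.

Lemma P_norm x : P x -> P (normO x)%:R.
Proof. by move=> Px; have ox := P_inO Px; rewrite normOE //; exact: P_mulr (inO_conj ox) Px. Qed.

Lemma prime_ideal_has_prime : exists2 p, prime p & P p%:R.
Proof.
have [x [Px nx]] := P_nonzero.
move: (normO x) (normO_gt0 (P_inO Px) nx) (P_norm Px).
elim/ltn_ind => n IH n_gt0 Pn.
have n_gt1 : (1 < n)%N.
  by rewrite ltn_neqAle n_gt0 andbT; apply/eqP => n1; apply: P_1; rewrite -[1]/(1%:R) n1.
have pdiv_n := pdiv_dvd n.
move: Pn; rewrite -(divnK pdiv_n) natrM => /P_prime [] //; try exact: inO_nat.
- apply: IH; first by rewrite ltn_Pdiv // prime_gt1 // pdiv_prime.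
  by rewrite divn_gt0 ?pdiv_gt0 // dvdn_leq.
- by exists (pdiv n); rewrite ?pdiv_prime.
Qed.

(* [pi] generates the maximal ideal of the localization O_P, with [s] a unit of O_P. *)
Definition local_uniformizer (pi : algC) (s : nat) : Prop :=
  [/\ P pi, pi != 0, P (s%:R - 1) & forall x, P x -> exists2 y, inO m y & s%:R * x = pi * y].

Section ResidueCharacteristic.

Variable p : nat.
Hypotheses (p_prime : prime p) (Pp : P p%:R).

Lemma natr_p_neq0 : (p%:R : algC) != 0.
Proof. by rewrite pnatr_eq0 -lt0n prime_gt0. Qed.

Lemma P_dvdz (k : int) : P k%:~R -> (p %| k)%Z.
Proof.
move=> Pk; apply/negPn/negP => ndvd; apply: P_1.
have : coprimez k p by rewrite coprimez_sym coprimezE /= prime_coprime.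
case/coprimezP=> [[u v]] /= uv.
have -> : (1 : algC) = u%:~R * k%:~R + v%:~R * p%:R.
  by rewrite -[p%:R]/((p%:Z)%:~R) -!intrM -intrD uv.
by apply: P_add; apply: P_mull => //; apply: inO_int.
Qed.

Lemma P_dvdn n : P n%:R -> (p %| n)%N.
Proof. by move/(@P_dvdz n). Qed.

Lemma P_Cint_divp x : x \in Num.int -> P x -> x / p%:R \in Num.int.
Proof.
move=> /intrP [k ->] /P_dvdz dvd.
by rewrite -(divzK dvd) intrM mulfK ?natr_p_neq0 ?intr_int.
Qed.

Lemma P_norm_divp x : P x -> x * x^* / p%:R \in Num.int.
Proof.
move=> Px; rewrite -normOE; last exact: P_inO.
by apply: P_Cint_divp (P_norm Px); rewrite natr_int.
Qed.

Lemma P_mul_conj_divp x y : P x -> P y -> inO m (x * y^* / p%:R).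
Proof.
move=> Px Py; have [ox oy] := (P_inO Px, P_inO Py).
have conj_xy : (x * y^*)^* = x^* * y by rewrite rmorphM /= conjCK.
apply: inO_divn; first by apply: inO_mul ox (inO_conj oy).
  apply: P_Cint_divp; first by apply: inO_trace_int; apply: inO_mul ox (inO_conj oy).
  rewrite conj_xy; apply: P_add; first exact: P_mulr (inO_conj oy) Px.
  exact: P_mull (inO_conj ox) Py.
have -> : x * y^* * (x * y^*)^* / p%:R ^+ 2 = (x * x^* / p%:R) * (y * y^* / p%:R).
  by rewrite conj_xy; field; apply: natr_p_neq0.
by rewrite rpredM ?P_norm_divp.
Qed.

Lemma local_uniformizer_p :
  (forall x, P x -> x * x^* / p%:R ^+ 2 \in Num.int) -> local_uniformizer p%:R 1.
Proof.
move=> p2_dvd_norm; split=> //; first exact: natr_p_neq0.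
  by rewrite subrr; apply: P_0.
move=> x Px; exists (x / p%:R); last by rewrite mul1r mulrC divfK ?natr_p_neq0.
apply: inO_divn (P_inO Px) _ (p2_dvd_norm _ Px).
have -> : (x + x^*) / p%:R
    = (x + p%:R) * (x + p%:R)^* / p%:R ^+ 2 - x * x^* / p%:R ^+ 2 - 1.
  by rewrite rmorphD /= conj_natr; field; apply: natr_p_neq0.
by rewrite !rpredB ?rpred1 ?p2_dvd_norm //; apply: P_add.
Qed.

Lemma local_uniformizer_norm pi c :
  P pi -> pi * pi^* = (c * p)%:R -> ~~ (p %| c)%N -> exists s, local_uniformizer pi s.
Proof.
move=> Ppi norm_pi ndvd.
have c_gt0 : (0 < c)%N by rewrite lt0n; apply: contraNneq ndvd => ->; rewrite dvdn0.
have pi_neq0 : pi != 0.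
  by rewrite -mul_conjC_eq0 norm_pi pnatr_eq0 muln_eq0 negb_or -!lt0n c_gt0 prime_gt0.
have [a [b ab]] : exists a b, (a * c = b * p + 1)%N.
  have cop : coprime c p by rewrite coprime_sym prime_coprime.
  by case: (egcdnP p c_gt0) => a b; rewrite (eqP cop) => ab _; exists a, b.
exists (a * c)%N; split=> //.
  by rewrite ab natrD addrK natrM; apply: P_mull (inO_nat _) Pp.
move=> x Px; exists (a%:R * (x * pi^* / p%:R)).
  exact: inO_mul (inO_nat _) (P_mul_conj_divp Px Ppi).
have -> : pi * (a%:R * (x * pi^* / p%:R)) = a%:R * x * (pi * pi^*) / p%:R by ring.
by rewrite norm_pi !natrM; field; apply: natr_p_neq0.
Qed.

Lemma local_uniformizer_exists : exists pi s, local_uniformizer pi s.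
Proof.
have [p2_dvd_norm|[pi Ppi norm_pi]] :
    (forall x, P x -> x * x^* / p%:R ^+ 2 \in Num.int) \/
    exists2 pi, P pi & pi * pi^* / p%:R ^+ 2 \notin Num.int.
  case: (classic (exists2 pi, P pi & pi * pi^* / p%:R ^+ 2 \notin Num.int)) => [|npi].
    by right.
  by left=> x Px; apply/negPn/negP => nx; apply: npi; exists x.
by exists p%:R, 1%N; apply: local_uniformizer_p.
have dvd := P_dvdn (P_norm Ppi).
exists pi; apply: (@local_uniformizer_norm pi (normO pi %/ p)) => //.
  by rewrite divnK // normOE //; apply: P_inO.
apply: contra norm_pi => dvd2; rewrite -normOE; last exact: P_inO.
rewrite -(divnK dvd) -(divnK dvd2) -mulnA !natrM -expr2.
by rewrite mulfK ?expf_neq0 ?natr_p_neq0 ?natr_int.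
Qed.

End ResidueCharacteristic.

Lemma prime_ideal_local_uniformizer :
  exists p pi s, [/\ prime p, P p%:R & local_uniformizer pi s].
Proof.
have [p p_prime Pp] := prime_ideal_has_prime.
by have [pi [s hu]] := local_uniformizer_exists p_prime Pp; exists p, pi, s.
Qed.

Lemma ipow_inO k x : ipow m P k x -> inO m x.
Proof.
elim=> [//|j|j y z _ oy _ oz|j a b Pa _ ob]; first exact: (inO_nat 0).
- exact: inO_add.
- exact: inO_mul (P_inO Pa) ob.
Qed.

Lemma ipow_mull k c x : inO m c -> ipow m P k x -> ipow m P k (c * x).
Proof.
move=> oc h; elim: h c oc => [y oy|j|j y z _ IHy _ IHz|j a b Pa hb _] c oc.
- exact/ipow_O/inO_mul.
- by rewrite mulr0; apply: ipow_0.
- by rewrite mulrDr; apply: ipow_add; [apply: IHy | apply: IHz].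
- by rewrite mulrA; apply: ipow_mul hb; apply: P_mull oc Pa.
Qed.

Lemma ipow_pred k x : ipow m P k x -> ipow m P k.-1 x.
Proof.
elim=> [y oy|j|j y z _ hy _ hz|j a b Pa hb _] /=.
- exact: ipow_O.
- exact: ipow_0.
- exact: ipow_add.
- exact: ipow_mull (P_inO Pa) hb.
Qed.

Lemma ipow_le i j x : (j <= i)%N -> ipow m P i x -> ipow m P j x.
Proof.
move=> /subnK <-; elim: (i - j)%N => [//|k IH] h.
exact: IH (ipow_pred h).
Qed.

Lemma ipow_sub k x y : ipow m P k x -> ipow m P k y -> ipow m P k (x - y).
Proof.
move=> hx hy; apply: ipow_add hx _; rewrite -mulN1r.
by apply: ipow_mull hy; apply: (inO_int (-1)).
Qed.

Lemma ipow_P k x : (0 < k)%N -> ipow m P k x -> P x.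
Proof.
move=> k_gt0 h; elim: h k_gt0 => [y oy|j|j y z _ hy _ hz|j a b Pa hb _] //.
- by move=> _; apply: P_0.
- by move=> k_gt0; apply: P_add; [apply: hy | apply: hz].
- by move=> _; apply: P_mulr (ipow_inO hb) Pa.
Qed.

Lemma ipow_exp k a y : P a -> inO m y -> ipow m P k (a ^+ k * y).
Proof.
move=> Pa oy; elim: k => [|k IH]; first by rewrite expr0 mul1r; apply: ipow_O.
by rewrite exprS -mulrA; apply: ipow_mul.
Qed.

Lemma ordO_rel_uniq y j1 j2 : ordO_rel m P y j1 -> ordO_rel m P y j2 -> j1 = j2.
Proof.
move=> [h1 n1] [h2 n2]; case: (ltngtP j1 j2) => // lt; exfalso.
- exact: n1 (ipow_le lt h2).
- exact: n2 (ipow_le lt h1).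
Qed.

Lemma ordO_rel_add x y a b c : ordO_rel m P x a -> ordO_rel m P y b ->
  ordO_rel m P (x + y) c -> (minn a b <= c)%N.
Proof.
move=> [hx _] [hy _] [_ nc]; rewrite leqNgt; apply/negP => lt; apply: nc.
apply: ipow_le lt _; apply: ipow_add.
  exact: ipow_le (geq_minl _ _) hx.
exact: ipow_le (geq_minr _ _) hy.
Qed.

Section Uniformizer.

Variables (p : nat) (pi : algC) (s : nat).
Hypotheses (p_prime : prime p) (Pp : P p%:R) (hu : local_uniformizer pi s).

Let Ppi : P pi. Proof. by case: hu. Qed.
Let pi_neq0 : pi != 0. Proof. by case: hu. Qed.
Let Ps1 : P (s%:R - 1). Proof. by case: hu. Qed.
Let uniformize x : P x -> exists2 y, inO m y & s%:R * x = pi * y.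
Proof. by case: hu => _ _ _; apply. Qed.

Lemma uniformizer_s_notin : ~ P s%:R.
Proof. by move=> Ps; apply: P_1; have := P_sub Ps Ps1; rewrite opprB addrC subrK. Qed.

Lemma P_expr_s_sub1 k : P (s%:R ^+ k - 1).
Proof.
elim: k => [|k IH]; first by rewrite expr0 subrr; apply: P_0.
have -> : s%:R ^+ k.+1 - 1 = s%:R * (s%:R ^+ k - 1) + (s%:R - 1) :> algC by rewrite exprS; ring.
by apply: P_add Ps1; apply: P_mull (inO_nat s) IH.
Qed.

Lemma ipow_uniformize k y : ipow m P k y -> exists2 z, inO m z & s%:R ^+ k * y = pi ^+ k * z.
Proof.
elim=> [x ox|j|j x z _ [x' ox' ex] _ [z' oz' ez]|j a b Pa _ [b' ob' eb]].
- by exists x; rewrite ?expr0 ?mul1r.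
- by exists 0; rewrite ?mulr0 //; apply: (inO_nat 0).
- by exists (x' + z'); [apply: inO_add | rewrite !mulrDr ex ez].
- have [a' oa' ea] := uniformize Pa.
  exists (a' * b'); first exact: inO_mul.
  have -> : s%:R ^+ j.+1 * (a * b) = (s%:R * a) * (s%:R ^+ j * b) by rewrite exprS; ring.
  by rewrite ea eb exprS; ring.
Qed.

Lemma ordO_rel_uniformize k y y' : inO m y -> inO m y' -> ~ P y' ->
  s%:R ^+ k * y = pi ^+ k * y' -> ordO_rel m P y k.
Proof.
move=> oy oy' nPy' e; split.
  suff : forall i, (i <= k)%N -> ipow m P i y by apply.
  elim=> [|i IH] le_ik; first exact: ipow_O.
  have -> : y = s%:R ^+ k * y - (s%:R ^+ k - 1) * y by ring.
  apply: ipow_sub; first by rewrite e; apply: ipow_le le_ik _; apply: ipow_exp.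
  by apply: ipow_mul (P_expr_s_sub1 k) (IH (ltnW le_ik)).
case/ipow_uniformize=> z oz ez.
have : pi ^+ k * (s%:R * y') = pi ^+ k * (pi * z).
  by rewrite mulrCA -e (mulrA s%:R) -exprS ez exprS; ring.
move/(mulfI (expf_neq0 k pi_neq0)) => e'.
have : P (s%:R * y') by rewrite e'; apply: P_mulr oz Ppi.
by case/P_prime=> //; [apply: inO_nat | move/uniformizer_s_notin].
Qed.

Lemma uniformizer_coprime : coprime p s.
Proof.
rewrite prime_coprime //; apply/negP => /dvdnP [k s_eq]; apply: uniformizer_s_notin.
by rewrite s_eq natrM; apply: P_mull (inO_nat k) Pp.
Qed.

Lemma uniformize_step y : inO m y -> y != 0 -> P y ->
  exists2 y1, [/\ inO m y1, y1 != 0 & s%:R * y = pi * y1]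
            & (logn p (normO y1) < logn p (normO y))%N.
Proof.
move=> oy ny Py; have [y1 oy1 e] := uniformize Py.
have s_gt0 : (0 < s)%N.
  by rewrite lt0n; apply/eqP => s0; apply: uniformizer_s_notin; rewrite s0; apply: P_0.
have ny1 : y1 != 0.
  have s_neq0 : (s%:R : algC) != 0 by rewrite pnatr_eq0 -lt0n.
  by apply/eqP => y1_0; move: (mulf_neq0 s_neq0 ny); rewrite e y1_0 mulr0 eqxx.
exists y1 => //.
have opi := P_inO Ppi.
have lpi : (0 < logn p (normO pi))%N.
  by rewrite logn_gt0 mem_primes p_prime normO_gt0 // (P_dvdn p_prime Pp (P_norm Ppi)).
have normE : (s * s * normO y = normO pi * normO y1)%N.
  by rewrite -normO_nat -!normOM ?e //; apply: inO_nat.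
have := congr1 (logn p) normE.
rewrite !lognM ?muln_gt0 ?s_gt0 ?normO_gt0 //.
by rewrite (logn_coprime uniformizer_coprime); lia.
Qed.

Lemma uniformize_factor y : inO m y -> y != 0 ->
  exists k y', [/\ inO m y', ~ P y' & s%:R ^+ k * y = pi ^+ k * y'].
Proof.
move: (leqnn (logn p (normO y))); move: {2}(logn p (normO y)) => t.
elim: t y => [|t IH] y le_t oy ny.
all: have [Py|nPy] := classic (P y); last by exists 0%N, y; rewrite !expr0 !mul1r.
  by have [y1 _ lt] := uniformize_step oy ny Py; move: (leq_trans lt le_t).
have [y1 [oy1 ny1 e] lt] := uniformize_step oy ny Py.
have [k [y' [oy' nPy' e']]] := IH y1 (leq_trans lt le_t) oy1 ny1.
exists k.+1, y'; split=> //.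
by rewrite exprSr -mulrA e mulrCA e' exprS mulrA.
Qed.

End Uniformizer.

Lemma ordO_exists y : inO m y -> y != 0 -> exists k, ordO_rel m P y k.
Proof.
move=> oy ny; have [p [pi [s [p_prime Pp hu]]]] := prime_ideal_local_uniformizer.
have [k [y' [oy' nPy' e]]] := uniformize_factor p_prime Pp hu oy ny.
by exists k; exact: (ordO_rel_uniformize hu oy oy' nPy' e).
Qed.

Lemma ordO_relM y z j k : inO m y -> inO m z -> y != 0 -> z != 0 ->
  ordO_rel m P y j -> ordO_rel m P z k -> ordO_rel m P (y * z) (j + k).
Proof.
move=> oy oz ny nz hj hk.
have [p [pi [s [p_prime Pp hu]]]] := prime_ideal_local_uniformizer.
have [j' [y' [oy' nPy' ey]]] := uniformize_factor p_prime Pp hu oy ny.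
have [k' [z' [oz' nPz' ez]]] := uniformize_factor p_prime Pp hu oz nz.
rewrite (ordO_rel_uniq hj (ordO_rel_uniformize hu oy oy' nPy' ey)).
rewrite (ordO_rel_uniq hk (ordO_rel_uniformize hu oz oz' nPz' ez)).
apply: (ordO_rel_uniformize hu (inO_mul oy oz) (inO_mul oy' oz')).
  by case/P_prime.
by rewrite !exprD mulrACA ey ez mulrACA.
Qed.

Lemma ord_rel_exists x : inK m x -> x != 0 -> exists k, ord_rel m P x k.
Proof.
move=> hx nx; have [d d_gt0 odx] := inK_den hx.
have nd : (d%:R : algC) != 0 by rewrite pnatr_eq0 -lt0n.
have [j1 h1] := ordO_exists odx (mulf_neq0 nd nx).
have [j2 h2] := ordO_exists (inO_nat d) nd.
by exists (j1%:Z - j2%:Z); split=> //; exists d, j1, j2.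
Qed.

Lemma ord_rel_uniq x k1 k2 : ord_rel m P x k1 -> ord_rel m P x k2 -> k1 = k2.
Proof.
move=> [_ nx [d1 [j1 [j2 [d1_gt0 o1 r1 r2 ->]]]]].
move=> [_ _ [d2 [i1 [i2 [d2_gt0 o2 r1' r2' ->]]]]].
have nd1 : (d1%:R : algC) != 0 by rewrite pnatr_eq0 -lt0n.
have nd2 : (d2%:R : algC) != 0 by rewrite pnatr_eq0 -lt0n.
have := ordO_relM (inO_nat d2) o1 nd2 (mulf_neq0 nd1 nx) r2' r1.
have := ordO_relM (inO_nat d1) o2 nd1 (mulf_neq0 nd2 nx) r2 r1'.
by rewrite mulrCA => /ordO_rel_uniq h /h; lia.
Qed.

Lemma ordP x : inK m x -> x != 0 -> ord_rel m P x (ord m P x).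
Proof.
by move=> hx nx; have [k hk] := ord_rel_exists hx nx; apply: epsilon_spec; exists k.
Qed.

Lemma ord_eq x k : ord_rel m P x k -> ord m P x = k.
Proof. by move=> hk; have [hx nx _] := hk; apply: ord_rel_uniq (ordP hx nx) hk. Qed.

Lemma ordM x y : inK m x -> inK m y -> x != 0 -> y != 0 ->
  ord m P (x * y) = ord m P x + ord m P y.
Proof.
move=> hx hy nx ny.
have [_ _ [d1 [j1 [j2 [d1_gt0 o1 r1 r2 ->]]]]] := ordP hx nx.
have [_ _ [d2 [i1 [i2 [d2_gt0 o2 r1' r2' ->]]]]] := ordP hy ny.
have nd1 : (d1%:R : algC) != 0 by rewrite pnatr_eq0 -lt0n.
have nd2 : (d2%:R : algC) != 0 by rewrite pnatr_eq0 -lt0n.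
have hxy := ordO_relM o1 o2 (mulf_neq0 nd1 nx) (mulf_neq0 nd2 ny) r1 r1'.
have hd := ordO_relM (inO_nat d1) (inO_nat d2) nd1 nd2 r2 r2'.
have e : d1%:R * x * (d2%:R * y) = (d1 * d2)%:R * (x * y) :> algC by rewrite natrM; ring.
rewrite e -natrM in hxy hd; rewrite (ord_eq (k := (j1 + i1)%:Z - (j2 + i2)%:Z)); first by lia.
split; [exact: inK_mul | exact: mulf_neq0 |].
exists (d1 * d2)%N, (j1 + i1)%N, (j2 + i2)%N; split=> //; first by rewrite muln_gt0 d1_gt0.
by rewrite -e; apply: inO_mul.
Qed.

Lemma ord1 : ord m P 1 = 0.
Proof.
apply: ord_eq; split; [exact: (inK_nat 1) | exact: oner_neq0 |].
exists 1%N, 0%N, 0%N; split=> //; rewrite ?mulr1; try exact: (inO_nat 1).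
all: split; [exact/ipow_O/(inO_nat 1) | by move/(ipow_P (ltn0Sn 0)); apply: P_1].
Qed.

Lemma ordX x k : inK m x -> x != 0 -> ord m P (x ^+ k) = ord m P x * k%:Z.
Proof.
move=> hx nx; elim: k => [|k IH]; first by rewrite expr0 ord1 mulr0.
rewrite exprS ordM ?expf_neq0 //; last exact: inK_exp.
by rewrite IH; lia.
Qed.

Lemma ordN x : inK m x -> x != 0 -> ord m P (- x) = ord m P x.
Proof.
move=> hx nx; have hN1 : inK m (-1) by apply: inK_opp (inK_nat 1).
have nN1 : (-1 : algC) != 0 by rewrite oppr_eq0 oner_neq0.
have ordN1 : ord m P (-1) = 0.
  by have := ordM hN1 hN1 nN1 nN1; rewrite mulrNN mulr1 ord1; lia.
by rewrite -mulN1r ordM // ordN1 add0r.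
Qed.

Lemma ord_add_ge x y t : inK m x -> inK m y -> x != 0 -> y != 0 -> x + y != 0 ->
  t <= ord m P x -> t <= ord m P y -> t <= ord m P (x + y).
Proof.
move=> hx hy nx ny nxy.
have [_ _ [d1 [_ [_ [d1_gt0 o1 _ _ _]]]]] := ordP hx nx.
have [_ _ [d2 [_ [_ [d2_gt0 o2 _ _ _]]]]] := ordP hy ny.
set d := (d1 * d2)%N; have d_gt0 : (0 < d)%N by rewrite muln_gt0 d1_gt0.
have nd : (d%:R : algC) != 0 by rewrite pnatr_eq0 -lt0n.
have odx : inO m (d%:R * x).
  by rewrite /d natrM [d1%:R * _]mulrC -mulrA; apply: inO_mul (inO_nat _) o1.
have ody : inO m (d%:R * y) by rewrite /d natrM -mulrA; apply: inO_mul (inO_nat _) o2.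
have odxy : inO m (d%:R * (x + y)) by rewrite mulrDr; apply: inO_add.
have [a ha] := ordO_exists odx (mulf_neq0 nd nx).
have [b hb] := ordO_exists ody (mulf_neq0 nd ny).
have [c hc] := ordO_exists odxy (mulf_neq0 nd nxy).
have [e he] := ordO_exists (inO_nat d) nd.
have ordE z (hz : inK m z) (nz : z != 0) (o : inO m (d%:R * z)) j :
    ordO_rel m P (d%:R * z) j -> ord m P z = j%:Z - e%:Z.
  by move=> hj; apply: ord_eq; split=> //; exists d, j, e.
rewrite (ordE _ hx nx odx _ ha) (ordE _ hy ny ody _ hb).
rewrite (ordE _ (inK_add hx hy) nxy odxy _ hc).
rewrite mulrDr in hc; have := ordO_rel_add ha hb hc.
by lia.
Qed.

Lemma ord_add_lt x y : inK m x -> inK m y -> x != 0 -> y != 0 -> x + y != 0 ->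
  ord m P x < ord m P y -> ord m P (x + y) = ord m P x.
Proof.
move=> hx hy nx ny nxy lt.
have ge : ord m P x <= ord m P (x + y) by apply: ord_add_ge => //; apply: ltW.
apply/eqP; rewrite eq_le ge andbT leNgt; apply/negP => gt.
have hNy := inK_opp hy; have nNy : - y != 0 by rewrite oppr_eq0.
have := @ord_add_ge (x + y) (- y) (ord m P x + 1) (inK_add hx hy) hNy nxy nNy.
rewrite addrK ordN // => /(_ nx) H.
have : ord m P x + 1 <= ord m P x by apply: H; lia.
by lia.
Qed.

Lemma ord_sum3_nz x y z : inK m x -> inK m y -> inK m z ->
  x != 0 -> y != 0 -> z != 0 -> x + y + z = 0 ->
  [\/ ord m P x = ord m P y, ord m P x = ord m P z | ord m P y = ord m P z].
Proof.
move=> hx hy hz nx ny nz e.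
have xy : x + y = - z by rewrite -[x + y](addrK z) e sub0r.
have nxy : x + y != 0 by rewrite xy oppr_eq0.
case: (ltgtP (ord m P x) (ord m P y)) => [lt|lt|]; last by constructor 1.
- by constructor 2; rewrite -(ordN hz nz) -xy ord_add_lt.
- by constructor 3; rewrite -(ordN hz nz) -xy addrC ord_add_lt // addrC.
Qed.

Lemma ord_sum3_eq0 x y z : inK m x -> inK m y -> inK m z -> x + y + z = 0 ->
  [|| x != 0, y != 0 | z != 0] ->
  [\/ [/\ x != 0, y != 0 & ord m P x = ord m P y],
      [/\ x != 0, z != 0 & ord m P x = ord m P z] |
      [/\ y != 0, z != 0 & ord m P y = ord m P z]].
Proof.
move=> hx hy hz e some_nz.
have opp_pair a b : inK m a -> a != 0 -> b = - a -> [/\ a != 0, b != 0 & ord m P a = ord m P b].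
  by move=> ha na ->; rewrite oppr_eq0 ordN.
have [x0|/eqP nx] := classic (x = 0).
  move: e some_nz; rewrite x0 add0r addrC => /eqP; rewrite addr_eq0 => /eqP -> some_nz.
  have ny : y != 0 by move: some_nz; rewrite eqxx oppr_eq0 orbb.
  by constructor 3; apply: opp_pair.
have [y0|/eqP ny] := classic (y = 0).
  move: e; rewrite y0 addr0 addrC => /eqP; rewrite addr_eq0 => /eqP ->.
  by constructor 2; apply: opp_pair.
have [z0|/eqP nz] := classic (z = 0).
  move: e; rewrite z0 addr0 addrC => /eqP; rewrite addr_eq0 => /eqP ->.
  by constructor 1; apply: opp_pair.
by case: (ord_sum3_nz hx hy hz nx ny nz e) => ?; [constructor 1 | constructor 2 | constructor 3].
Qed.

Lemma ord_mod_expr l c t : (0 < l)%N -> inK m c -> inK m t -> c * t ^+ l != 0 ->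
  (ord m P (c * t ^+ l) = ord m P c %[mod l%:Z])%Z.
Proof.
move=> l_gt0 hc ht nct.
have nc : c != 0 by apply: contraNneq nct => ->; rewrite mul0r.
have nt : t != 0 by apply: contraNneq nct => ->; rewrite expr0n eqn0Ngt l_gt0 mulr0.
rewrite ordM ?expf_neq0 //; last exact: inK_exp.
by rewrite ordX // addrC modzMDl.
Qed.

Lemma not_pw_distinct_sum_expr l c1 c2 c3 t1 t2 t3 : (0 < l)%N ->
  inK m c1 -> inK m c2 -> inK m c3 -> inK m t1 -> inK m t2 -> inK m t3 ->
  c1 * t1 ^+ l + c2 * t2 ^+ l + c3 * t3 ^+ l = 0 ->
  [|| c1 * t1 ^+ l != 0, c2 * t2 ^+ l != 0 | c3 * t3 ^+ l != 0] ->
  ~ pw_distinct_mod l (ord m P c1) (ord m P c2) (ord m P c3).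
Proof.
move=> l_gt0 hc1 hc2 hc3 ht1 ht2 ht3 e some_nz [d12 d13 d23].
have hX c t : inK m c -> inK m t -> inK m (c * t ^+ l).
  by move=> hc ht; apply: inK_mul hc (inK_exp _ ht).
have modX := ord_mod_expr l_gt0.
case: (ord_sum3_eq0 (hX _ _ hc1 ht1) (hX _ _ hc2 ht2) (hX _ _ hc3 ht3) e some_nz).
- case=> n1 n2 eq; move: d12.
  by rewrite -(modX _ _ hc1 ht1 n1) -(modX _ _ hc2 ht2 n2) eq eqxx.
- case=> n1 n3 eq; move: d13.
  by rewrite -(modX _ _ hc1 ht1 n1) -(modX _ _ hc3 ht3 n3) eq eqxx.
- case=> n2 n3 eq; move: d23.
  by rewrite -(modX _ _ hc2 ht2 n2) -(modX _ _ hc3 ht3 n3) eq eqxx.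
Qed.

End PrimeIdeal.

Section Equation.


Variables (P : algC -> Prop) (l v n : nat) (eps eta : algC) (sigma : int).
Hypotheses (hP : prime_ideal m P) (l_gt0 : (0 < l)%N) (v_gt0 : (0 < v)%N) (n_gt0 : (0 < n)%N).
Hypotheses (eps_K : inK m eps) (eps_neq0 : eps != 0) (eta_K : inK m eta).
Hypothesis eq_sigma_eta : v%:R * sigma%:~R ^+ l + n%:R * w = eps * eta ^+ l.

Let W_K : inK m (n%:R * w). Proof. exact: inK_mul (inK_nat n) inK_sqrtm. Qed.
Let W_neq0 : n%:R * w != 0. Proof. by rewrite mulf_neq0 ?sqrtm_neq0 // pnatr_eq0 -lt0n. Qed.
Let two_neq0 : (2%:R : algC) != 0. Proof. by rewrite pnatr_eq0. Qed.
Let epsc_K : inK m eps^*. Proof. exact: inK_conj. Qed.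
Let etac_K : inK m eta^*. Proof. exact: inK_conj. Qed.

Lemma conj_eq_sigma_eta : v%:R * sigma%:~R ^+ l - n%:R * w = eps^* * eta^* ^+ l.
Proof.
have conjV : (v%:R * sigma%:~R ^+ l : algC)^* = v%:R * sigma%:~R ^+ l.
  by rewrite conj_Crat // rpredM ?rpredX ?rpred_nat ?rpred_int.
have conjW : (n%:R * w)^* = - (n%:R * w).
  by rewrite rmorphM /= conj_natr conj_sqrtm mulrN.
by rewrite -conjV -conjW -rmorphD eq_sigma_eta rmorphM rmorphXn.
Qed.

Lemma not_pw_distinct_of_sum :
  ~ pw_distinct_mod l (ord m P v%:R) (ord m P (n%:R * w)) (ord m P eps).
Proof.
rewrite -(ordN hP eps_K eps_neq0).
apply: (not_pw_distinct_sum_expr hP l_gt0 (inK_nat v) W_K (inK_opp eps_K)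
          (inK_int sigma) (inK_nat 1) eta_K).
  by rewrite expr1n mulr1 mulNr eq_sigma_eta addrN.
by rewrite expr1n mulr1 W_neq0 orbT.
Qed.

Lemma not_pw_distinct_of_trace :
  ~ pw_distinct_mod l (ord m P (2%:R * v%:R)) (ord m P eps) (ord m P eps^*).
Proof.
have twov_K : inK m (2%:R * v%:R) by apply: inK_mul; apply: inK_nat.
rewrite -(ordN hP twov_K) ?mulf_neq0 ?pnatr_eq0 -?lt0n //.
apply: (not_pw_distinct_sum_expr hP l_gt0 (inK_opp twov_K) eps_K epsc_K
          (inK_int sigma) eta_K etac_K).
  by rewrite -eq_sigma_eta -conj_eq_sigma_eta; ring.
have diff : eps * eta ^+ l - eps^* * eta^* ^+ l = 2%:R * (n%:R * w).
  by rewrite -eq_sigma_eta -conj_eq_sigma_eta; ring.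
have : eps * eta ^+ l - eps^* * eta^* ^+ l != 0 by rewrite diff mulf_neq0.
apply: contraNT; rewrite !negb_or !negbK => /and3P [_ /eqP -> /eqP ->].
by rewrite subrr.
Qed.

Lemma not_pw_distinct_of_diff :
  ~ pw_distinct_mod l (ord m P (2%:R * n%:R * w)) (ord m P eps) (ord m P eps^*).
Proof.
have twoW_K : inK m (2%:R * n%:R * w) by rewrite -mulrA; apply: inK_mul (inK_nat 2) W_K.
have twoW_neq0 : 2%:R * n%:R * w != 0 by rewrite -mulrA mulf_neq0.
rewrite -(ordN hP twoW_K twoW_neq0) -(ordN hP epsc_K) ?conjC_eq0 //.
apply: (not_pw_distinct_sum_expr hP l_gt0 (inK_opp twoW_K) eps_K (inK_opp epsc_K)
          (inK_nat 1) eta_K etac_K).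
  by rewrite expr1n mulr1 -eq_sigma_eta mulNr -conj_eq_sigma_eta; ring.
by rewrite expr1n mulr1 oppr_eq0 twoW_neq0.
Qed.

End Equation.

End QuadraticField.

Theorem lemma9p1 (l R S T v m n : nat) (eps : algC) (q : algC -> Prop) :
  prime l ->
  (0 < R)%N -> (0 < S)%N -> (0 < T)%N ->
  coprime R S -> coprime R T -> coprime S T ->
  (0 < v)%N -> (S * Sprime S = v ^ 2)%N ->
  (0 < m)%N -> squarefree m -> (0 < n)%N -> (T * Sprime S = m * n ^ 2)%N ->
  in_E l (R * Sprime S) n m eps ->
  prime_ideal m q ->
  (pw_distinct_mod l (ord m q v%:R) (ord m q (n%:R * sqrtm m)) (ord m q eps)
   \/ pw_distinct_mod l (ord m q (2%:R * v%:R)) (ord m q eps) (ord m q eps^*)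
   \/ pw_distinct_mod l (ord m q (2%:R * n%:R * sqrtm m)) (ord m q eps) (ord m q eps^*)) ->
  ~ exists (sigma : int) (eta : algC),
      inK m eta /\ v%:R * sigma%:~R ^+ l + n%:R * sqrtm m = eps * eta ^+ l.
Proof.
move=> /prime_gt0 l_gt0 _ _ _ _ _ _ v_gt0 _ m_gt0 _ n_gt0 _ [eps_K eps_neq0 _ _] hq.
move=> ord_distinct [sigma [eta [eta_K E]]].
case: ord_distinct => [|[|]].
- exact: (not_pw_distinct_of_sum m_gt0 hq l_gt0 n_gt0 eps_K eps_neq0 eta_K E).
- exact: (not_pw_distinct_of_trace m_gt0 hq l_gt0 v_gt0 n_gt0 eps_K eta_K E).
- exact: (not_pw_distinct_of_diff m_gt0 hq l_gt0 n_gt0 eps_K eps_neq0 eta_K E).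
Qed.
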